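(* Let $G$ be a finite group, $X$ a $G$-homogeneous space, and $Q_1,\dots,Q_m$ probability distributions on $G$. For a word $w=w_1\cdots w_N$ with $w_i\in\{1,\dots,m\}$ let $Q^{(w)}:=Q_{w_1}\ast\cdots\ast Q_{w_N}$ and $q^{(w)}:=\sum_{g\in G}Q^{(w)}(g)e_g\in\mathbb{C}G$. Then \[\lim_{N\rightarrow \infty} \left(\max_{x_0\in X,\ w:|w|=N}\|q^{(w)}\cdot e_{x_0} -\overline{u}\|_{\rm TV}\right)^{\frac{1}{N}}=\overline{\omega}_X\left(Q_1,\dots, Q_m\right),\] where the maximum is over all words $w$ of length $N$ and all $x_0\in X$. Furthermore, $\{Q_1,\dots,Q_m\}$ has the adversarial mixing property on $X$ if and only if $\overline{\omega}_X(Q_1,\dots,Q_m)<1$.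
   Context: Convolution: $(P\ast R)(h)=\sum_{g}P(hg^{-1})R(g)$. A $G$-homogeneous space is a finite set $X$ with transitive $G$-action; $\mathbb{C}X$ has basis $\{e_x\}$ and is a $\mathbb{C}G$-module via $e_g\cdot e_x:=e_{g(x)}$. $\|h\|_{\rm TV}:=\frac12\sum_x|h(x)|$; $\overline{u}:=\frac1{|X|}\sum_x e_x$. Let $(V_j,\rho_j)$ be the irreducible complex representations of $G$, each with a fixed orthonormal basis $B_j$ for a $G$-invariant inner product, and $\hat{Q}(\rho_j):=\sum_gQ(g)[\rho_j(g)]_{B_j}$. The joint spectral radius of complex square matrices $A_1,\dots,A_m$ is ${\rm jsr}(A_1,\dots,A_m):=\lim_{N\to\infty}\max_{|w|=N}\|A_{w_1}\cdots A_{w_N}\|^{1/N}$ (independent of the matrix norm). The Fourier joint spectral radius relative to $X$ is $\overline{\omega}_X(Q_1,\dots,Q_m):=\max\{{\rm jsr}(\widehat{Q_1}(\rho_j),\dots,\widehat{Q_m}(\rho_j))\}$, the maximum over nontrivial irreducible $\rho_j$ appearing with nonzero multiplicity in $\mathbb{C}X$. The set $\{Q_1,\dots,Q_m\}$ has the adversarial mixing property on $X$ if $\lim_{N\to\infty}\max_{x_0\in X,|w|=N}\|q^{(w)}\cdot e_{x_0}-\overline{u}\|_{\rm TV}=0$. *)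

From HB Require Import structures.
From mathcomp Require Import all_boot all_order all_algebra all_fingroup.
From mathcomp Require Import mxrepresentation.
From mathcomp Require Import all_classical all_reals all_analysis.
From mathcomp Require Import complex.

Set Implicit Arguments.
Unset Strict Implicit.
Unset Printing Implicit Defensive.

Import Order.TTheory GRing.Theory Num.Theory.
Import numFieldNormedType.Exports.
Local Open Scope classical_set_scope.
Local Open Scope ring_scope.

Section Defs.
Variable R : realType.
Variable gT : finGroupType.

Definition cmod (z : R[i]) : R := Num.sqrt (complex.Re z ^+ 2 + complex.Im z ^+ 2).

Definition is_prob (P : gT -> R) : Prop :=
  (forall g, 0 <= P g) /\ \sum_(g : gT) P g = 1.

Definition conv (P P' : gT -> R) : gT -> R :=
  fun h => \sum_(g : gT) P (h * g^-1)%g * P' g.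

Definition delta1 : gT -> R := fun g => (g == 1%g)%:R.

Variable m : nat.
Variable Q : 'I_m -> gT -> R.

Definition Qword (w : seq 'I_m) : gT -> R :=
  foldr (fun i acc => conv (Q i) acc) delta1 w.

Variable X : finType.
Variable act : gT -> X -> X.

(* Coefficients of P . e_{x0} = sum_g P(g) e_{g(x0)} in the basis (e_x). *)
Definition act_vec (P : gT -> R) (x0 : X) : X -> R :=
  fun x => \sum_(g : gT | act g x0 == x) P g.

Definition tv_norm (h : X -> R) : R := 2^-1 * \sum_(x : X) `|h x|.

Definition dev (w : seq 'I_m) (x0 : X) : R :=
  tv_norm (fun x => act_vec (Qword w) x0 x - (#|X|%:R)^-1).

Definition maxdev (N : nat) : R :=
  \big[Num.max/0]_(x0 : X) \big[Num.max/0]_(w : N.-tuple 'I_m) dev w x0.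

Definition adversarial_mixing : Prop := maxdev @ \oo --> (0 : R).

(* A matrix norm (entrywise l1 norm; jsr does not depend on the norm). *)
Definition mxnorm n (A : 'M[R[i]]_n) : R := \sum_(i < n) \sum_(j < n) cmod (A i j).

Definition mxword n (A : 'I_m -> 'M[R[i]]_n) (w : seq 'I_m) : 'M[R[i]]_n :=
  foldr (fun i M => A i *m M) 1%:M w.

Definition jsr n (A : 'I_m -> 'M[R[i]]_n) : R :=
  limn (fun N : nat =>
    powR (\big[Num.max/0]_(w : N.-tuple 'I_m) mxnorm (mxword A w)) (N%:R^-1)).

Definition fourier n (P : gT -> R) (rho : mx_representation R[i] [set: gT]%G n)
  : 'M[R[i]]_n := \sum_(g : gT) ((P g)%:C)%C *: rho g.

(* rho appears with nonzero multiplicity in CX: there is a nonzero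
   G-equivariant linear map T : V -> CX, T v = sum_x (t x *m v) e_x,
   equivariance T (rho g v) = g . T v  <=>  t (g x) *m rho g = t x. *)
Definition appears_in_CX n (rho : mx_representation R[i] [set: gT]%G n) : Prop :=
  exists t : X -> 'rV[R[i]]_n,
    (exists x, t x != 0) /\ forall g x, t (act g x) *m rho g = t x.

Definition trivial_rep n (rho : mx_representation R[i] [set: gT]%G n) : Prop :=
  forall g, rho g = 1%:M.

(* Fourier joint spectral radius relative to X: maximum over nontrivial
   irreducible representations appearing in CX (sup of this finite set;
   0 if the set is empty). *)
Definition omegaX : R :=
  sup [set r : R | exists n (rho : mx_representation R[i] [set: gT]%G n),
     [/\ mx_irreducible rho, ~ trivial_rep rho, appears_in_CX rho &
         r = jsr (fun i => fourier (Q i) rho)]].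

End Defs.

(* Let D_w be the matrix of q^(w) acting on CX and u the uniform vector. The
   deviations q^(w) e_x - u = D_w (e_x - u) live in the augmentation submodule
   W0 = {v | sum v = 0}, which by Maschke splits into simple modules, each a
   nontrivial irreducible constituent tau of CX; expanding e_x - u along them
   bounds the maximal deviation by C max_tau max_|w|=N |hat Q^(w)(tau)|.
   Conversely a nontrivial irreducible rho appearing in CX is the image of an
   intertwiner T out of CX whose column sums vanish (rho has no fixed vectors),
   so hat Q^(w)(rho) = L D_w T = L (D_w - J/|X|) T is bounded by c times the
   maximal deviation. The two sequences thus have the same N-th root limit,
   which exists by Fekete's lemma since max_|w|=N |A_w| is submultiplicative.
   For the mixing criterion, N-th roots tending below 1 force geometric decay,
   while a submultiplicative sequence that dips below 1 has Fekete limit < 1. *)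

From Pilot Require Import Defs.
From HB Require Import structures.
From mathcomp Require Import all_boot all_order all_algebra all_fingroup.
From mathcomp Require Import mxrepresentation.
From mathcomp Require Import all_classical all_reals all_analysis.
From mathcomp Require Import complex.
From mathcomp.algebra_tactics Require Import lra.

Set Implicit Arguments.
Unset Strict Implicit.
Unset Printing Implicit Defensive.

Import Order.TTheory GRing.Theory Num.Theory.
Import numFieldNormedType.Exports.
Local Open Scope classical_set_scope.
Local Open Scope ring_scope.

Section NthRoot.
Variable R : realType.
Implicit Types (a b : nat -> R) (c L : R).

(* At N = 0 the exponent is 0^-1 = 0, so nroot a 0 = 1. *)
Definition nroot a (N : nat) : R := powR (a N) N%:R^-1.

Lemma cvg_powR_invn c : 0 < c -> (fun N : nat => powR c N%:R^-1) @ \oo --> (1 : R).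
Proof.
move=> c0.
have -> : (fun N : nat => powR c N%:R^-1) = (fun N => expR (N%:R^-1 * ln c)).
  by apply: funext => N; rewrite /powR gt_eqF.
have harm : (fun N : nat => N%:R^-1) @ \oo --> (0 : R).
  by rewrite -cvg_shiftS; exact: cvg_harmonic.
have inv0 : (fun N : nat => N%:R^-1 * ln c) @ \oo --> 0 * ln c.
  by have := cvgM harm (cvg_cst (ln c)); apply.
rewrite mul0r in inv0.
have := continuous_cvg _ (@continuous_expR R 0) inv0.
by rewrite expR0; apply.
Qed.

Lemma powR_invn_exprn c N : 0 <= c -> (0 < N)%N -> powR (c ^+ N) N%:R^-1 = c.
Proof.
move=> c0 N0; rewrite -powR_mulrn // -powRrM mulfV ?powRr1 //.
by rewrite pnatr_eq0 -lt0n.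
Qed.

Lemma exprn_powR_invn c N : 0 <= c -> (0 < N)%N -> powR c N%:R^-1 ^+ N = c.
Proof.
move=> c0 N0; rewrite -powR_mulrn ?powR_ge0 // -powRrM mulVf ?powRr1 //.
by rewrite pnatr_eq0 -lt0n.
Qed.

Lemma ler_nroot a b N : 0 <= a N -> a N <= b N -> nroot a N <= nroot b N.
Proof.
move=> a0 ab; apply: ge0_ler_powR; rewrite ?invr_ge0 ?ler0n ?nnegrE //.
exact: le_trans ab.
Qed.

Lemma cvg_nrootZ c b L : 0 < c -> (forall N, 0 <= b N) ->
  nroot b @ \oo --> L -> nroot (fun N => c * b N) @ \oo --> L.
Proof.
move=> c0 b0 bL; rewrite -[L]mul1r.
suff -> : nroot (fun N => c * b N) = (fun N => powR c N%:R^-1 * nroot b N).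
  by have := cvgM (cvg_powR_invn c0) bL; apply.
by apply: funext => N; rewrite /nroot powRM ?(ltW c0) ?b0.
Qed.

Lemma cvg_nroot_squeeze a b c c' L : 0 < c -> 0 < c' -> (forall N, 0 <= b N) ->
  (forall N, c * b N <= a N) -> (forall N, a N <= c' * b N) ->
  nroot b @ \oo --> L -> nroot a @ \oo --> L.
Proof.
move=> c0 c'0 b0 lo hi bL.
have cb0 N : 0 <= c * b N by rewrite mulr_ge0 ?(ltW c0).
apply: (squeeze_cvgr _ (cvg_nrootZ c0 b0 bL) (cvg_nrootZ c'0 b0 bL)).
near=> N; rewrite !ler_nroot //; exact: le_trans (lo N).
Unshelve. all: by end_near.
Qed.

Lemma ler_nroot_lim a b c (La Lb : R) : 0 < c -> (forall N, 0 <= a N) ->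
  (forall N, a N <= c * b N) ->
  nroot a @ \oo --> La -> nroot b @ \oo --> Lb -> La <= Lb.
Proof.
move=> c0 a0 ab aL bL.
have b0 N : 0 <= b N by have := le_trans (a0 N) (ab N); rewrite pmulr_rge0.
apply: (ler_cvg_to aL (cvg_nrootZ c0 b0 bL)).
by near=> N; apply: ler_nroot.
Unshelve. all: by end_near.
Qed.

Lemma cvg_max a b La Lb : a @ \oo --> La -> b @ \oo --> Lb ->
  (fun N => Num.max (a N) (b N)) @ \oo --> Num.max La Lb.
Proof.
move=> aL bL; rewrite maxr_absE.
have -> : (fun N => Num.max (a N) (b N)) = (fun N => (a N + b N + `|a N - b N|) / 2).
  by apply: funext => N; rewrite maxr_absE.
apply: cvgM; last exact: cvg_cst.
by apply: cvgD; [exact: cvgD | apply: cvg_norm; exact: cvgB].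
Qed.

Lemma cvg_bigmax (I : finType) (u : I -> nat -> R) (l : I -> R) :
  (forall i, u i @ \oo --> l i) ->
  (fun N => \big[Num.max/0]_i u i N) @ \oo --> \big[Num.max/0]_i l i.
Proof.
move=> ul; elim: (index_enum I) => [|i s IH].
  by rewrite big_nil; under eq_fun do rewrite big_nil; exact: cvg_cst.
by rewrite big_cons; under eq_fun do rewrite big_cons; exact: cvg_max.
Qed.

Lemma powR_max (x y e : R) : 0 <= x -> 0 <= y -> 0 <= e ->
  powR (Num.max x y) e = Num.max (powR x e) (powR y e).
Proof.
move=> x0 y0 e0; rewrite !maxEle.
have [xy|yx] := leP x y; first by rewrite ge0_ler_powR ?nnegrE.
move/ltW: yx => yx; have yxe : powR y e <= powR x e by rewrite ge0_ler_powR ?nnegrE.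
by case: ifP => // xye; apply/eqP; rewrite eq_le xye.
Qed.

Lemma cvg_nroot_bigmax (I : finType) (u : I -> nat -> R) (l : I -> R) :
  (forall i N, 0 <= u i N) -> (forall i, nroot (u i) @ \oo --> l i) ->
  nroot (fun N => \big[Num.max/0]_i u i N) @ \oo --> \big[Num.max/0]_i l i.
Proof.
move=> u0 ul; rewrite -cvg_shiftS /=.
have -> : (fun N => nroot (fun n => \big[Num.max/0]_i u i n) N.+1) =
    (fun N => \big[Num.max/0]_i nroot (u i) N.+1).
  apply: funext => N; rewrite /nroot.
  have e0 : 0 < N.+1%:R^-1 :> R by rewrite invr_gt0 ltr0n.
  elim: (index_enum I) => [|i s IH]; first by rewrite !big_nil powR0 // gt_eqF.
  by rewrite !big_cons powR_max ?u0 ?bigmax_ge_id ?ltW // IH.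
by apply: cvg_bigmax => i; rewrite cvg_shiftS; exact: ul.
Qed.

Section Fekete.
Variable a : nat -> R.
Hypothesis a_ge0 : forall n, 0 <= a n.
Hypothesis a_submul : forall p q, a (p + q)%N <= a p * a q.

Lemma submul_mulSn p q : a (q.+1 * p)%N <= a p ^+ q.+1.
Proof.
elim: q => [|q IH]; first by rewrite mul1n expr1.
by rewrite mulSn exprSr addnC (le_trans (a_submul _ _)) // ler_wpM2r.
Qed.

Lemma submul_divn p N : (0 < p)%N -> (p <= N)%N ->
  a N <= a p ^+ (N %/ p) * a (N %% p).
Proof.
move=> p0 pN; rewrite {1}(divn_eq N p) (le_trans (a_submul _ _)) // ler_wpM2r //.
have : (0 < N %/ p)%N by rewrite divn_gt0.
by case: (N %/ p)%N => // q _; exact: submul_mulSn.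
Qed.

Lemma nroot_submul_le p : (0 < p)%N -> exists2 K, 0 < K &
  forall N, (p <= N)%N -> nroot a N <= nroot a p * powR K N%:R^-1.
Proof.
move=> p0; set y := nroot a p.
have [ap0|apn0] := eqVneq (a p) 0.
  exists 1 => // N pN; have N0 : (0 < N)%N := leq_trans p0 pN.
  suff -> : nroot a N = 0 by rewrite mulr_ge0 ?powR_ge0.
  have := submul_divn p0 pN; rewrite ap0 expr0n gtn_eqF ?divn_gt0 // mul0r => aN0.
  rewrite /nroot (_ : a N = 0); last by apply/eqP; rewrite eq_le aN0 a_ge0.
  by rewrite powR0 // invr_eq0 pnatr_eq0 -lt0n.
have y0 : 0 < y by rewrite powR_gt0 // lt0r apn0 a_ge0.
have apy : a p = y ^+ p by rewrite exprn_powR_invn.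
pose K := 1 + \sum_(r < p) a r / y ^+ r.
have K1 : 1 <= K.
  by rewrite lerDl; apply: sumr_ge0 => r _; rewrite divr_ge0 ?exprn_ge0 // ltW.
exists K => [|N pN]; first exact: lt_le_trans K1.
have N0 : (0 < N)%N := leq_trans p0 pN.
have aNK : a N <= y ^+ N * K.
  have rp : (N %% p < p)%N by rewrite ltn_mod.
  have arK : a (N %% p) <= y ^+ (N %% p) * K.
    rewrite -ler_pdivrMl ?exprn_gt0 // mulrC /K (bigD1 (Ordinal rp)) //= addrCA lerDl.
    by rewrite addr_ge0 //; apply: sumr_ge0 => r _; rewrite divr_ge0 ?exprn_ge0 // ltW.
  apply: le_trans (submul_divn p0 pN) _.
  rewrite {3}(divn_eq N p) exprD apy -exprM mulnC -mulrA.
  by apply: ler_wpM2l; rewrite ?exprn_ge0 ?(ltW y0).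
have K0 : 0 <= K by exact: le_trans K1.
rewrite -{1}(powR_invn_exprn (ltW y0) N0) -powRM ?exprn_ge0 ?(ltW y0) //.
exact: (ler_nroot (b := fun N => y ^+ N * K)).
Qed.

Definition fekete_lim : R := inf [set nroot a N | N in [set N | (0 < N)%N]].

Lemma fekete_lim_le N : (0 < N)%N -> fekete_lim <= nroot a N.
Proof.
move=> N0; apply: ge_inf; last by exists N.
by exists 0 => _ [M _ <-]; exact: powR_ge0.
Qed.

Lemma fekete : nroot a @ \oo --> fekete_lim.
Proof.
have inf_a : has_inf [set nroot a N | N in [set N | (0 < N)%N]].
  by split; [exists (nroot a 1), 1%N | exists 0 => _ [M _ <-]; exact: powR_ge0].
apply/cvgrPdist_lt => e e0.
have e2 : 0 < e / 2 by rewrite divr_gt0.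
have [_ [p p0 <-] ap_lt] := inf_adherent e2 inf_a.
have [K K0 aK] := nroot_submul_le p0.
have ap_lt' : nroot a p < fekete_lim + e.
  by apply: (lt_le_trans ap_lt); rewrite lerD2l ler_pdivrMr // ler_pMr // ler1n.
have cvg_bound : (fun N => nroot a p * powR K N%:R^-1) @ \oo --> nroot a p.
  by have := cvgM (cvg_cst (nroot a p)) (cvg_powR_invn K0); rewrite mulr1; apply.
near=> N.
have pN : (p <= N)%N by near: N; exact: nbhs_infty_ge.
rewrite distrC ger0_norm ?subr_ge0 ?fekete_lim_le ?(leq_trans p0) // ltrBlDl.
apply: le_lt_trans (aK N pN) _.
by near: N; exact: cvgr_lt cvg_bound _ ap_lt'.
Unshelve. all: by end_near.
Qed.

End Fekete.

Lemma nroot_lim_ge0 a L : nroot a @ \oo --> L -> 0 <= L.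
Proof. by move/(ler_cvg_to (cvg_cst 0)); apply; apply: nearW => N; exact: powR_ge0. Qed.

Lemma nroot_cvg0 a L : (forall N, 0 <= a N) -> nroot a @ \oo --> L -> L < 1 ->
  a @ \oo --> 0.
Proof.
move=> a0 aL L1; set r := (1 + L) / 2.
have r0 : 0 <= r by have := nroot_lim_ge0 aL; rewrite /r; lra.
apply: (@squeeze_cvgr _ _ _ _ (fun=> 0) (fun N => r ^+ N)).
- near=> N; rewrite a0 /=.
  have N0 : (0 < N)%N by near: N; exact: nbhs_infty_ge.
  rewrite -(exprn_powR_invn (a0 N) N0) ler_pXn2r ?nnegrE ?powR_ge0 //.
  by near: N; apply: (cvgr_le _ aL); rewrite /r; lra.
- exact: cvg_cst.
- by have := @cvg_expr R r; rewrite ger0_norm //; apply; rewrite /r; lra.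
Unshelve. all: by end_near.
Qed.

Lemma nroot_lim_lt1 a L : (forall n, 0 <= a n) ->
  (forall p q, a (p + q)%N <= a p * a q) -> nroot a @ \oo --> L ->
  (exists2 N, (0 < N)%N & a N < 1) -> L < 1.
Proof.
move=> a0 asub aL [N N0 aN1].
rewrite (cvg_unique _ aL (fekete a0 asub)) //.
apply: le_lt_trans (fekete_lim_le a N0) _; rewrite ltNge; apply: contraTN aN1 => aN.
by rewrite -leNgt -(exprn_powR_invn (a0 N) N0) exprn_ege1.
Qed.

Lemma submul_bigmax (I : finType) (u : I -> nat -> R) :
  (forall i n, 0 <= u i n) -> (forall i p q, u i (p + q)%N <= u i p * u i q) ->
  forall p q, \big[Num.max/0]_i u i (p + q)%N <=
    (\big[Num.max/0]_i u i p) * \big[Num.max/0]_i u i q.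
Proof.
move=> u0 usub p q; apply/bigmax_leP; split=> [|i _].
  by rewrite mulr_ge0 ?bigmax_ge_id.
by apply: le_trans (usub i p q) _; apply: ler_pM; rewrite ?u0 ?le_bigmax.
Qed.

Lemma bigmax_le_uniform (I : finType) (u : I -> nat -> R) (v : nat -> R) :
  (forall N, 0 <= v N) -> (forall i, exists2 c, 0 < c & forall N, u i N <= c * v N) ->
  exists2 c, 0 < c & forall N, \big[Num.max/0]_i u i N <= c * v N.
Proof.
move=> v0 uv.
have /fin_all_exists [c cP] : forall i, exists c, forall N, u i N <= c * v N.
  by move=> i; have [c _ ?] := uv i; exists c.
have c1 : 1 <= \big[Num.max/1]_i c i := bigmax_ge_id _ _ _ _.
exists (\big[Num.max/1]_i c i) => [|N]; first exact: lt_le_trans c1.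
apply/bigmax_leP; split=> [|i _]; first by rewrite mulr_ge0 // (le_trans ler01).
by apply: le_trans (cP i N) _; rewrite ler_wpM2r // le_bigmax.
Qed.

Lemma sup_eq_attained (S : set R) (M : R) :
  (forall r, S r -> 0 <= r <= M) -> M = 0 \/ S M -> sup S = M.
Proof.
move=> SM M0S; have [[r Sr]|S0] := pselect (exists r, S r).
  have supS : has_sup S by split; [exists r | exists M => x /SM /andP[]].
  have supM : sup S <= M by apply: ge_sup => [|x /SM /andP[]//]; exists r.
  apply/eqP; rewrite eq_le supM /=; case: M0S => [M0|]; last exact: sup_upper_bound.
  by have /andP[r0 _] := SM r Sr; rewrite M0 (le_trans r0 (sup_upper_bound supS Sr)).
rewrite (_ : S = set0) ?sup0; last by apply/seteqP; split => // x Sx; apply: S0; exists x.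
by case: M0S => // SM0; case: S0; exists M.
Qed.

End NthRoot.

Section EntrywiseNorm.
Variable R : realType.
Local Notation C := R[i].

Lemma cmodE (z : C) : cmod z = Normc.normc z.
Proof. by case: z. Qed.

Lemma cmod_ge0 (z : C) : 0 <= cmod z.
Proof. exact: sqrtr_ge0. Qed.

Lemma cmodM (z w : C) : cmod (z * w) = cmod z * cmod w.
Proof. by rewrite !cmodE Normc.normcM. Qed.

Lemma cmodR (x : R) : cmod x%:C%C = `|x|.
Proof. by rewrite /cmod /= expr0n /= addr0 sqrtr_sqr. Qed.

Lemma cmod_sum (I : Type) (r : seq I) (P : pred I) (F : I -> C) :
  cmod (\sum_(i <- r | P i) F i) <= \sum_(i <- r | P i) cmod (F i).
Proof.
elim/big_rec2: _ => [|i y z _ Hz]; first by rewrite cmodE Normc.normc0.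
have := le_normcD (F i) z; rewrite -!cmodE => /le_trans; apply.
by rewrite lerD2l.
Qed.

Definition l1mx p q (A : 'M[C]_(p, q)) : R := \sum_i \sum_j cmod (A i j).

Lemma l1mx_ge0 p q (A : 'M[C]_(p, q)) : 0 <= l1mx A.
Proof. by apply: sumr_ge0 => i _; apply: sumr_ge0 => j _; exact: cmod_ge0. Qed.

Lemma l1mx_mul_colbound p q r (A : 'M[C]_(p, q)) (B : 'M[C]_(q, r)) (c : R) :
  (forall l, \sum_i cmod (A i l) <= c) -> l1mx (A *m B) <= c * l1mx B.
Proof.
move=> Ac; apply: (@le_trans _ _ (\sum_i \sum_j \sum_l cmod (A i l) * cmod (B l j))).
  apply: ler_sum => i _; apply: ler_sum => j _; rewrite mxE.
  by apply: le_trans (cmod_sum _ _ _) _; apply: ler_sum => l _; rewrite cmodM.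
rewrite /l1mx mulr_sumr; under eq_bigr do rewrite exchange_big /=.
rewrite exchange_big /=; apply: ler_sum => l _.
rewrite mulr_sumr exchange_big /=; apply: ler_sum => j _.
by rewrite -mulr_suml ler_wpM2r ?cmod_ge0.
Qed.

Lemma l1mx_mul p q r (A : 'M[C]_(p, q)) (B : 'M[C]_(q, r)) :
  l1mx (A *m B) <= l1mx A * l1mx B.
Proof.
apply: l1mx_mul_colbound => l; rewrite /l1mx; apply: ler_sum => i _.
rewrite (bigD1 l) //= lerDl; apply: sumr_ge0 => j _; exact: cmod_ge0.
Qed.

Lemma l1mx_sum p q (I : finType) (A : I -> 'M[C]_(p, q)) :
  l1mx (\sum_i A i) <= \sum_i l1mx (A i).
Proof.
rewrite /l1mx [X in _ <= X]exchange_big /=; apply: ler_sum => j _.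
rewrite [X in _ <= X]exchange_big /=; apply: ler_sum => l _.
by rewrite summxE; exact: cmod_sum.
Qed.

End EntrywiseNorm.

Section JointSpectralRadius.
Variables (R : realType) (m n : nat) (A : 'I_m -> 'M[R[i]]_n).

Lemma mxword_cat (s1 s2 : seq 'I_m) : mxword A (s1 ++ s2) = mxword A s1 *m mxword A s2.
Proof. by elim: s1 => [|i s1 IH] /=; rewrite ?mul1mx // IH mulmxA. Qed.

Definition jsr_seq (N : nat) : R :=
  \big[Num.max/0]_(w : N.-tuple 'I_m) mxnorm (mxword A w).

Lemma jsr_seq_ge0 N : 0 <= jsr_seq N.
Proof. exact: bigmax_ge_id. Qed.

Lemma mxnorm_le_jsr_seq N (w : N.-tuple 'I_m) : mxnorm (mxword A w) <= jsr_seq N.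
Proof. exact: (le_bigmax _ (fun w : N.-tuple 'I_m => mxnorm (mxword A w))). Qed.

Lemma jsr_seq_submul p q : jsr_seq (p + q) <= jsr_seq p * jsr_seq q.
Proof.
apply/bigmax_leP; split=> [|w _]; first by rewrite mulr_ge0 ?jsr_seq_ge0.
have [sz_p sz_q] : size (take p w) == p /\ size (drop p w) == q.
  by rewrite size_takel ?size_drop size_tuple ?addKn ?leq_addr.
rewrite -(cat_take_drop p w) mxword_cat.
apply: le_trans (l1mx_mul _ _) _.
apply: ler_pM; rewrite ?l1mx_ge0 //.
  exact: (mxnorm_le_jsr_seq (Tuple sz_p)).
exact: (mxnorm_le_jsr_seq (Tuple sz_q)).
Qed.

Lemma jsr_cvg : nroot jsr_seq @ \oo --> jsr A.
Proof.
have cv := fekete jsr_seq_ge0 jsr_seq_submul.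
by rewrite /jsr -/(nroot jsr_seq) (cvg_lim _ cv).
Qed.

Lemma jsr_ge0 : 0 <= jsr A.
Proof. exact: nroot_lim_ge0 jsr_cvg. Qed.

End JointSpectralRadius.

Section FourierTransform.
Variables (R : realType) (gT : finGroupType).
Local Notation C := R[i].
Local Notation rep n := (mx_representation C [set: gT]%G n).

Lemma fourier_conv n (rho : rep n) (P P' : gT -> R) :
  fourier (Defs.conv P P') rho = fourier P rho *m fourier P' rho.
Proof.
rewrite /fourier /Defs.conv mulmx_suml.
transitivity (\sum_b \sum_a ((P a * P' b)%:C%C *: rho (a * b)%g)).
  under eq_bigr do rewrite rmorph_sum scaler_suml.
  rewrite exchange_big /=; apply: eq_bigr => g _.
  by rewrite (reindex_inj (mulIg g)) /=; apply: eq_bigr => a _; rewrite mulgK.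
rewrite exchange_big /=; apply: eq_bigr => a _; rewrite mulmx_sumr; apply: eq_bigr => b _.
by rewrite -scalemxAl -scalemxAr scalerA repr_mxM ?inE // rmorphM.
Qed.

Lemma fourier_delta1 n (rho : rep n) : fourier (@delta1 R gT) rho = 1%:M.
Proof.
rewrite /fourier (bigD1 1%g) //= big1 ?addr0; first by rewrite /delta1 eqxx scale1r repr_mx1.
by move=> g /negPf g1; rewrite /delta1 g1 scale0r.
Qed.

Lemma fourier_Qword m (Q : 'I_m -> gT -> R) n (rho : rep n) (w : seq 'I_m) :
  fourier (Qword Q w) rho = mxword (fun i => fourier (Q i) rho) w.
Proof.
elim: w => [|i w IH] /=; first exact: fourier_delta1.
by rewrite fourier_conv IH.
Qed.

Lemma fourier_intertwine n1 n2 (rho1 : rep n1) (rho2 : rep n2) (T : 'M[C]_(n1, n2))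
  (P : gT -> R) :
  (forall g, rho1 g *m T = T *m rho2 g) -> fourier P rho1 *m T = T *m fourier P rho2.
Proof.
move=> hT; rewrite /fourier mulmx_suml mulmx_sumr; apply: eq_bigr => g _.
by rewrite -scalemxAl -scalemxAr hT.
Qed.

Lemma irr_fixed_row0 n (rho : rep n) (v : 'rV[C]_n) :
  mx_irreducible rho -> ~ trivial_rep rho ->
  (forall g, v *m rho g = v) -> v = 0.
Proof.
move=> irr ntriv vfix; apply/eqP; apply: contraT => vnz; exfalso; apply: ntriv => g.
have /mx_irrP [_ irrU] := irr.
have vF : (v <= rfix_mx rho [set: gT]%G)%MS by apply/rfix_mxP => h _; exact: vfix.
have Fnz : rfix_mx rho [set: gT]%G != 0.
  by apply: contraNneq vnz => F0; move: vF; rewrite F0 submx0.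
have := irrU _ (rfix_mx_module rho) Fnz; rewrite -sub1mx => /rfix_mxP Ffix.
by rewrite -[rho g]mul1mx Ffix ?inE.
Qed.

Lemma intertwiner_row_full n1 n2 (rho1 : rep n1) (rho2 : rep n2) (T : 'M[C]_(n1, n2)) :
  mx_irreducible rho2 -> T != 0 -> (forall g, rho1 g *m T = T *m rho2 g) ->
  row_full T.
Proof.
move=> /mx_irrP [_ irrU] Tnz Tint.
have Tmod : mxmodule rho2 <<T>>%MS.
  by rewrite (eqmx_module _ (genmxE T)); apply/mxmoduleP => g _; rewrite -Tint submxMl.
have := irrU _ Tmod; rewrite -mxrank_eq0 genmxE mxrank_eq0 => /(_ Tnz).
by rewrite /row_full genmxE.
Qed.

Definition dual_mx n (rho : rep n) (g : gT) : 'M[C]_n := (rho g^-1%g)^T.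

Lemma dual_mx_repr n (rho : rep n) : mx_repr [set: gT]%G (dual_mx rho).
Proof.
split; first by rewrite /dual_mx invg1 repr_mx1 trmx1.
by move=> g h _ _; rewrite /dual_mx invMg repr_mxM ?inE // trmx_mul.
Qed.

Definition dual_rep n (rho : rep n) : rep n := MxRepresentation (dual_mx_repr rho).

Lemma dual_rep_irr n (rho : rep n) : mx_irreducible rho -> mx_irreducible (dual_rep rho).
Proof.
move=> /mx_irrP [n0 irrU]; apply/mx_irrP; split => // U Umod Unz.
have Kmod : mxmodule rho (kermx U^T).
  apply/mxmoduleP => g _; apply/sub_kermxP.
  have /submxP [M eM] : (U *m dual_rep rho g^-1%g <= U)%MS.
    by move/mxmoduleP: Umod; apply; rewrite inE.
  rewrite -mulmxA (_ : rho g *m U^T = (U *m dual_rep rho g^-1%g)^T); last first.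
    by rewrite trmx_mul /= /dual_mx invgK trmxK.
  by rewrite eM trmx_mul mulmxA mulmx_ker mul0mx.
have K0 : kermx U^T = 0.
  apply/eqP; apply: contraT => /(irrU _ Kmod) /row_fullP [L LK].
  have UT0 : U^T = 0 by rewrite -[U^T]mul1mx -LK -mulmxA mulmx_ker mulmx0.
  by move: Unz; rewrite -trmx_eq0 UT0 eqxx.
by have := kermx_eq0 U^T; rewrite K0 eqxx /row_free mxrank_tr => /esym.
Qed.

End FourierTransform.

Section PermutationRepresentation.
Variables (R : realType) (gT : finGroupType) (X : finType) (act : gT -> X -> X).
Hypothesis act1 : forall x, act 1%g x = x.
Hypothesis actM : forall g h x, act (g * h)%g x = act g (act h x).
Local Notation C := R[i].
Local Notation k := #|X|.
Local Notation rep n := (mx_representation C [set: gT]%G n).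

Definition pt (i : 'I_k) : X := enum_val i.

Lemma actK g : cancel (act g) (act g^-1%g).
Proof. by move=> x; rewrite -actM mulVg act1. Qed.

Lemma actVK g : cancel (act g^-1%g) (act g).
Proof. by move=> x; rewrite -actM mulgV act1. Qed.

Lemma sum_pt (V : nmodType) (F : X -> V) : \sum_(i < k) F (pt i) = \sum_x F x.
Proof. by rewrite [RHS]big_enum_val. Qed.

(* Column j is e_(g x_j), so on column vectors this is e_g acting on CX in the
   basis (e_(pt i)). As a MathComp representation (acting on row vectors)
   permrep is the dual of CX, hence the dual_rep in subrep_dual below. *)
Definition permrep_mx (g : gT) : 'M[C]_k := \matrix_(i, j) (pt i == act g (pt j))%:R.

Lemma row_permrep_mul n g i (M : 'M[C]_(k, n)) :
  row i (permrep_mx g *m M) = row (enum_rank (act g^-1%g (pt i))) M.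
Proof.
rewrite row_mul mulmx_sum_row (bigD1 (enum_rank (act g^-1%g (pt i)))) //= big1 ?addr0.
  by rewrite !mxE /pt enum_rankK actVK eqxx scale1r.
move=> l ne_l; rewrite !mxE; case: eqP => [il|]; last by rewrite scale0r.
by move: ne_l; rewrite il actK /pt enum_valK eqxx.
Qed.

Lemma permrep_mx_repr : mx_repr [set: gT]%G permrep_mx.
Proof.
split=> [|g h _ _].
  by apply/matrixP => i j; rewrite !mxE act1 (inj_eq enum_val_inj).
apply/row_matrixP => i; rewrite row_permrep_mul; apply/rowP => j.
by rewrite !mxE /pt enum_rankK (can2_eq (actVK g) (actK g)) actM.
Qed.

Lemma tr_permrep_mx g : (permrep_mx g)^T = permrep_mx g^-1%g.
Proof.
apply/matrixP => i j; rewrite !mxE.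
by rewrite eq_sym (can2_eq (actK g) (actVK g)).
Qed.

Lemma mul_permrep_mx_entry (v : 'rV[C]_k) g j :
  (v *m permrep_mx g) 0 j = v 0 (enum_rank (act g (pt j))).
Proof.
transitivity ((permrep_mx g^-1%g *m v^T) j 0); first by rewrite -tr_permrep_mx -trmx_mul [RHS]mxE.
by have /rowP/(_ 0) := row_permrep_mul g^-1%g j v^T; rewrite !mxE invgK.
Qed.

Definition permrep : rep k := MxRepresentation permrep_mx_repr.

Lemma fourier_permrep (P : gT -> R) i j :
  fourier P permrep i j = (act_vec act P (pt j) (pt i))%:C%C.
Proof.
rewrite /fourier summxE /act_vec rmorph_sum [RHS]big_mkcond /=.
by apply: eq_bigr => g _; rewrite !mxE eq_sym; case: eqP; rewrite ?mulr1 ?mulr0.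
Qed.

Lemma permrep_mx_ones g : permrep_mx g *m const_mx 1 = const_mx 1 :> 'cV[C]_k.
Proof. by apply/row_matrixP => i; rewrite row_permrep_mul !row_const. Qed.

Lemma ones_permrep_mx g : const_mx 1 *m permrep_mx g = const_mx 1 :> 'rV[C]_k.
Proof. by rewrite -[LHS]trmxK trmx_mul tr_permrep_mx trmx_const permrep_mx_ones trmx_const. Qed.

Lemma appears_in_CXP n (rho : rep n) : appears_in_CX act rho <->
  exists2 T : 'M[C]_(k, n), T != 0 & forall g, permrep_mx g *m T = T *m rho g.
Proof.
split=> [[t [[x tx] tG]] | [T Tnz Tint]].
  pose T : 'M[C]_(k, n) := \matrix_(i, j) t (pt i) 0 j.
  have rowT i : row i T = t (pt i) by apply/rowP => j; rewrite !mxE.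
  exists T.
    by apply: contraNneq tx => T0; rewrite -(enum_rankK x) -/(pt _) -rowT T0 row0.
  move=> g; apply/row_matrixP => i.
  by rewrite row_permrep_mul row_mul !rowT /pt enum_rankK -{2}(actVK g (enum_val i)) tG.
exists (fun x => row (enum_rank x) T); split.
  have [i Ti] : exists i, row i T != 0.
    apply/existsP; apply: contraR Tnz => /existsPn T0.
    by apply/eqP/row_matrixP => i; rewrite row0; apply/eqP/negPn.
  by exists (pt i); rewrite /pt enum_valK.
by move=> g x; rewrite -row_mul -Tint row_permrep_mul /pt enum_rankK actK.
Qed.

Definition CX_constituent n (rho : rep n) : Prop :=
  [/\ mx_irreducible rho, ~ trivial_rep rho & appears_in_CX act rho].

Lemma colsum_intertwiner0 n (rho : rep n) (T : 'M[C]_(k, n)) :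
  mx_irreducible rho -> ~ trivial_rep rho ->
  (forall g, permrep_mx g *m T = T *m rho g) -> (const_mx 1 : 'rV[C]_k) *m T = 0.
Proof.
move=> irr ntriv Tint; apply: irr_fixed_row0 irr ntriv _ => g.
by rewrite -mulmxA -Tint mulmxA ones_permrep_mx.
Qed.

Hypothesis trans : forall x y : X, exists g, act g x = y.
Hypothesis X_gt0 : (0 < k)%N.

Definition W0 : 'M[C]_k := kermx (const_mx 1 : 'cV[C]_k).

Lemma W0_module : mxmodule permrep W0.
Proof.
by apply/mxmoduleP => g _; apply/sub_kermxP; rewrite -mulmxA permrep_mx_ones mulmx_ker.
Qed.

Lemma fixed_row_W0_eq0 (v : 'rV[C]_k) :
  (forall g, v *m permrep_mx g = v) -> (v <= W0)%MS -> v = 0.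
Proof.
move=> vfix /sub_kermxP v0.
have vconst j : v 0 j = v 0 (Ordinal X_gt0).
  have [g gj] := trans (pt j) (pt (Ordinal X_gt0)).
  by rewrite -{1}(vfix g) mul_permrep_mx_entry gj /pt enum_valK.
have : (v *m (const_mx 1 : 'cV[C]_k)) 0 0 = k%:R * v 0 (Ordinal X_gt0).
  rewrite mxE (eq_bigr (fun=> v 0 (Ordinal X_gt0))) => [|j _]; last by rewrite mxE mulr1 vconst.
  by rewrite sumr_const card_ord mulr_natl.
rewrite v0 mxE => /esym /eqP; rewrite mulf_eq0 pnatr_eq0 gtn_eqF //= => /eqP vi0.
by apply/rowP => j; rewrite vconst vi0 mxE.
Qed.

Definition centered_basis (l : 'I_k) : 'cV[C]_k :=
  \col_j ((j == l)%:R - k%:R^-1).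

Lemma centered_basis_W0 l : ((centered_basis l)^T <= W0)%MS.
Proof.
apply/sub_kermxP/matrixP => i0 j0; rewrite !mxE.
rewrite (eq_bigr (fun j => (j == l)%:R - k%:R^-1)) => [|j _]; last by rewrite !mxE mulr1.
rewrite sumrB sumr_const card_ord -[_ *+ k]mulr_natr mulVf ?pnatr_eq0 -?lt0n //.
by rewrite (bigD1 l) //= eqxx big1 ?addr0 ?subrr // => j /negPf ->.
Qed.

Lemma W0_semisimple : exists (I : finType) (W : I -> 'M[C]_k),
  [/\ forall i, mxsimple permrep (W i), forall i, (W i <= W0)%MS & (W0 <= \sum_i W i)%MS].
Proof.
have pg : pgroup.pgroup [pchar C]^' [set: gT]%G.
  by rewrite /pgroup.pgroup pcharf'_nat pnatr_eq0 -lt0n cardG_gt0.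
have red := mx_reducibleS W0_module (submx1 _) (mx_Maschke_pchar permrep pg).
apply/asboolP/(mx_reducible_semisimple W0_module red) => -[I W /= simW defW _].
apply/asboolP; exists I, W; split=> // [i|]; last by rewrite -defW.
by rewrite -defW; exact: (sumsmx_sup i).
Qed.

Definition basis_mx (U : 'M[C]_k) : 'M[C]_(\rank U, k) := val_submod 1%:M.

Definition subrep_dual (U : 'M[C]_k) (Umod : mxmodule permrep U) : rep (\rank U) :=
  dual_rep (submod_repr Umod).

Lemma basis_mx_eq0 (U : 'M[C]_k) : (basis_mx U == 0) = (U == 0).
Proof. by rewrite -!mxrank_eq0 /basis_mx (val_submod1 U).1. Qed.

Lemma basis_mx_intertwine (U : 'M[C]_k) (Umod : mxmodule permrep U) g :
  permrep_mx g *m (basis_mx U)^T = (basis_mx U)^T *m subrep_dual Umod g.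
Proof.
rewrite /= /dual_mx -[permrep_mx g]trmxK tr_permrep_mx -!trmx_mul; congr trmx.
have := @val_submodJ _ _ _ _ _ _ Umod _ 1%:M g^-1%g.
by rewrite inE mul1mx val_submodE => ->.
Qed.

Lemma subrep_dual_constituent (U : 'M[C]_k) (simU : mxsimple permrep U) :
  (U <= W0)%MS -> CX_constituent (subrep_dual (mxsimple_module simU)).
Proof.
set Umod := mxsimple_module simU => UW0.
have Unz : basis_mx U != 0 by rewrite basis_mx_eq0; have [] := simU.
split.
- exact/dual_rep_irr/(submod_mx_irr Umod).
- move=> triv; case/negP: Unz; apply/eqP/row_matrixP => i; rewrite row0.
  apply: fixed_row_W0_eq0 => [g|]; last first.
    by apply: submx_trans (row_sub i _) _; apply: submx_trans UW0; exact: val_submodP.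
  rewrite -row_mul -[_ *m _]trmxK trmx_mul tr_permrep_mx basis_mx_intertwine triv.
  by rewrite mulmx1 trmxK.
- apply/appears_in_CXP; exists (basis_mx U)^T; first by rewrite trmx_eq0.
  exact: basis_mx_intertwine.
Qed.

Section Words.
Variables (m : nat) (Q : 'I_m -> gT -> R).

Definition dev_mx (P : gT -> R) : 'M[C]_k :=
  \matrix_(i, j) (act_vec act P (pt j) (pt i) - k%:R^-1)%:C%C.

Lemma sum_cmod_dev_mx (w : seq 'I_m) l :
  \sum_i cmod (dev_mx (Qword Q w) i l) = 2 * dev Q act w (pt l).
Proof.
rewrite /dev /tv_norm mulrA divff ?pnatr_eq0 // mul1r -sum_pt.
by apply: eq_bigr => i _; rewrite mxE cmodR.
Qed.

Lemma dev_le_maxdev N (w : N.-tuple 'I_m) x : dev Q act w x <= maxdev Q act N.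
Proof.
apply: le_trans (le_bigmax _ _ x).
exact: (le_bigmax _ (fun w : N.-tuple 'I_m => dev Q act w x) w).
Qed.

Lemma maxdev_ge0 N : 0 <= maxdev Q act N.
Proof. exact: bigmax_ge_id. Qed.

Lemma fourier_permrep_mul_dev (P : gT -> R) n (T : 'M[C]_(k, n)) :
  (const_mx 1 : 'rV[C]_k) *m T = 0 -> fourier P permrep *m T = dev_mx P *m T.
Proof.
move=> /matrixP T0; apply/matrixP => i j; rewrite !mxE.
under [RHS]eq_bigr do rewrite mxE rmorphB /= mulrBl -fourier_permrep.
rewrite sumrB -mulr_sumr (_ : \sum_l T l j = 0) ?mulr0 ?subr0 //.
by have := T0 0 j; rewrite !mxE; under eq_bigr do rewrite mxE mul1r.
Qed.

Lemma jsr_seq_le_maxdev n (rho : rep n) : CX_constituent rho ->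
  exists2 c, 0 < c &
    forall N, jsr_seq (fun i => fourier (Q i) rho) N <= c * maxdev Q act N.
Proof.
move=> [irr ntriv /appears_in_CXP [T Tnz Tint]].
have [L LT] := row_fullP (intertwiner_row_full (rho1 := permrep) irr Tnz Tint).
have T0 := colsum_intertwiner0 irr ntriv Tint.
exists (1 + 2 * l1mx L * l1mx T) => [|N].
  by rewrite ltr_pwDl // !mulr_ge0 ?l1mx_ge0.
apply/bigmax_leP; split=> [|w _].
  by rewrite mulr_ge0 ?maxdev_ge0 // addr_ge0 // !mulr_ge0 ?l1mx_ge0.
(* hat q(rho) = L (D T) and D T = (D - J/|X|) T, as the columns of T sum to 0. *)
rewrite -fourier_Qword -[fourier _ rho]mul1mx -LT -mulmxA.
rewrite -(fourier_intertwine (rho1 := permrep) _ Tint) fourier_permrep_mul_dev //.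
apply: le_trans (l1mx_mul _ _) _.
have devT : l1mx (dev_mx (Qword Q w) *m T) <= 2 * maxdev Q act N * l1mx T.
  apply: l1mx_mul_colbound => l.
  by rewrite sum_cmod_dev_mx ler_wpM2l ?dev_le_maxdev.
apply: le_trans (ler_wpM2l (l1mx_ge0 L) devT) _.
have := maxdev_ge0 N; have := l1mx_ge0 L; have := l1mx_ge0 T; nra.
Qed.

Hypothesis Q_sum1 : forall i, \sum_g Q i g = 1.

Lemma Qword_sum1 (w : seq 'I_m) : \sum_g Qword Q w g = 1.
Proof.
elim: w => [|i w IH] /=.
  by rewrite (bigD1 1%g) //= big1 ?addr0 /delta1 ?eqxx // => g /negPf ->.
rewrite /Defs.conv exchange_big /= -IH; apply: eq_bigr => g _.
rewrite -mulr_suml (reindex_inj (mulIg g)) /=.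
by under eq_bigr do rewrite mulgK; rewrite Q_sum1 mul1r.
Qed.

Lemma act_vec_sum (P : gT -> R) x : \sum_y act_vec act P y x = \sum_g P g.
Proof.
rewrite /act_vec (eq_bigr _ (fun y _ => big_mkcond _ _)) exchange_big /=.
apply: eq_bigr => g _; rewrite (bigD1 (act g^-1%g x)) //= actVK eqxx big1 ?addr0 //.
by move=> y /negP ne_y; case: eqP => // gy; case: ne_y; rewrite -gy actK.
Qed.

Lemma col_dev_mx (w : seq 'I_m) l :
  col l (dev_mx (Qword Q w)) =
    fourier (Qword Q w) permrep *m centered_basis l.
Proof.
apply/colP => i; rewrite !mxE; under eq_bigr do rewrite !mxE mulrBr.
rewrite sumrB (bigD1 l) //= big1 => [|j /negPf jl]; last by rewrite jl mulr0.
rewrite eqxx mulr1 addr0 -mulr_suml fourier_permrep rmorphB /= fmorphV rmorph_nat.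
congr (_ - _); rewrite -[LHS]mul1r; congr (_ * _); symmetry.
under eq_bigr do rewrite fourier_permrep.
by rewrite -rmorph_sum (sum_pt (fun y => act_vec act _ y (pt i))) act_vec_sum Qword_sum1.
Qed.

Section Components.
Variables (I : finType) (W : I -> 'M[C]_k).
Hypothesis W_simple : forall i, mxsimple permrep (W i).
Hypothesis W0_sum : (W0 <= \sum_i W i)%MS.

Let tau i := subrep_dual (mxsimple_module (W_simple i)).
Let b N := \big[Num.max/0]_i jsr_seq (fun j => fourier (Q j) (tau i)) N.

Lemma W0_coords (v : 'cV[C]_k) : (v^T <= W0)%MS ->
  exists y : forall i, 'cV_(\rank (W i)), v = \sum_i (basis_mx (W i))^T *m y i.
Proof.
move=> /submx_trans /(_ W0_sum) /sub_sumsmxP [u vu].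
exists (fun i => ((u i *m W i) *m pinvmx (basis_mx (W i)))^T).
rewrite -[v]trmxK vu linear_sum; apply: eq_bigr => i _.
rewrite -trmx_mul mulmxKpV // /basis_mx; have [_ ->] := val_submod1 (W i).
exact: submxMl.
Qed.

Lemma dev_le_components x : exists2 K, 0 < K &
  forall N, \big[Num.max/0]_(w : N.-tuple 'I_m) dev Q act w x <= K * b N.
Proof.
have [y cy] := W0_coords (centered_basis_W0 (enum_rank x)).
set K := \sum_i l1mx (basis_mx (W i))^T * l1mx (y i).
have K0 : 0 <= K by apply: sumr_ge0 => i _; rewrite mulr_ge0 ?l1mx_ge0.
exists (1 + K) => [|N]; first by rewrite ltr_pwDl.
have b0 : 0 <= b N := bigmax_ge_id _ _ _ _.
apply/bigmax_leP; split=> [|w _]; first by rewrite mulr_ge0 // addr_ge0.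
have devE : 2 * dev Q act w x = l1mx (col (enum_rank x) (dev_mx (Qword Q w))).
  rewrite -{1}(enum_rankK x) -sum_cmod_dev_mx; apply: eq_bigr => i _.
  by rewrite big_ord1 [in RHS]mxE.
have : l1mx (col (enum_rank x) (dev_mx (Qword Q w))) <= K * b N.
  rewrite col_dev_mx cy mulmx_sumr mulr_suml; apply: le_trans (l1mx_sum _) _.
  apply: ler_sum => i _; rewrite mulmxA (fourier_intertwine (rho1 := permrep) _
    (basis_mx_intertwine (mxsimple_module (W_simple i)))).
  rewrite -mulmxA -mulrA; apply: le_trans (l1mx_mul _ _) _; rewrite ler_wpM2l ?l1mx_ge0 //.
  apply: le_trans (l1mx_mul _ _) _; rewrite mulrC ler_wpM2l ?l1mx_ge0 //.
  rewrite fourier_Qword; apply: le_trans (le_bigmax _ _ i).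
  exact: mxnorm_le_jsr_seq.
have : 0 <= dev Q act w x by rewrite mulr_ge0 ?sumr_ge0 ?invr_ge0.
rewrite -devE; nra.
Qed.

Lemma maxdev_le_components : exists2 K, 0 < K & forall N, maxdev Q act N <= K * b N.
Proof.
apply: bigmax_le_uniform => [N|]; first exact: bigmax_ge_id.
exact: dev_le_components.
Qed.

Hypothesis W_sub : forall i, (W i <= W0)%MS.

Lemma components_le_maxdev : exists2 c, 0 < c & forall N, b N <= c * maxdev Q act N.
Proof.
apply: bigmax_le_uniform => [|i]; first exact: maxdev_ge0.
exact/jsr_seq_le_maxdev/subrep_dual_constituent/W_sub.
Qed.

Let M := \big[Num.max/0]_i jsr (fun j => fourier (Q j) (tau i)).

Lemma nroot_components_cvg : nroot b @ \oo --> M.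
Proof. by apply: cvg_nroot_bigmax => [i N|i]; [exact: jsr_seq_ge0 | exact: jsr_cvg]. Qed.

Lemma nroot_maxdev_cvg : nroot (maxdev Q act) @ \oo --> M.
Proof.
have [K K0 dev_le] := maxdev_le_components.
have [c c0 b_le] := components_le_maxdev.
have ci0 : 0 < c^-1 by rewrite invr_gt0.
apply: cvg_nroot_squeeze ci0 K0 _ _ dev_le nroot_components_cvg => [N|N].
  exact: bigmax_ge_id.
by rewrite ler_pdivrMl.
Qed.

Lemma jsr_constituent_le n (rho : rep n) :
  CX_constituent rho -> jsr (fun j => fourier (Q j) rho) <= M.
Proof.
move=> rhoX; have [c c0 rho_le] := jsr_seq_le_maxdev rhoX.
have [K K0 dev_le] := maxdev_le_components.
apply: (ler_nroot_lim (mulr_gt0 c0 K0) (@jsr_seq_ge0 _ _ _ _) _ (@jsr_cvg _ _ _ _)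
  nroot_components_cvg) => N.
rewrite -mulrA; apply: le_trans (rho_le N) _.
by apply: ler_wpM2l; [exact: ltW | exact: dev_le].
Qed.

Lemma omegaX_eq : omegaX Q act = M.
Proof.
apply: sup_eq_attained => [r [n [rho [irr ntriv app ->]]]|].
  by rewrite jsr_ge0 jsr_constituent_le.
have [i0 _|I0] := pickP (fun _ : I => true); last by left; exact: big_pred0 I0.
set j := [arg max_(i > i0) jsr (fun j => fourier (Q j) (tau i))]%O.
right; exists (\rank (W j)), (tau j).
have [irr ntriv app] := subrep_dual_constituent (W_simple j) (W_sub j).
by split=> //; apply: bigmax_eq_arg => // i _; exact: jsr_ge0.
Qed.

Lemma mixing_iff : adversarial_mixing Q act <-> M < 1.
Proof.
split=> [adv|M1]; last exact: nroot_cvg0 maxdev_ge0 nroot_maxdev_cvg M1.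
have [c c0 b_le] := components_le_maxdev.
apply: nroot_lim_lt1 nroot_components_cvg _ => [N||].
- exact: bigmax_ge_id.
- by apply: submul_bigmax => i; [exact: jsr_seq_ge0 | exact: jsr_seq_submul].
have cmaxdev0 : (fun N => c * maxdev Q act N) @ \oo --> 0.
  by have := cvgM (cvg_cst c) adv; rewrite mulr0; apply.
have small_b : \forall N \near \oo, (0 < N)%N /\ b N < 1.
  near=> N; split; first by near: N; exact: nbhs_infty_ge.
  by apply: le_lt_trans (b_le N) _; near: N; exact: cvgr_lt cmaxdev0 _ ltr01.
by have [N [N0 bN1]] := filter_ex small_b; exists N.
Unshelve. all: by end_near.
Qed.

End Components.
End Words.
End PermutationRepresentation.

Theorem theorem1p6 (R : realType) (gT : finGroupType) (X : finType)
  (act : gT -> X -> X) (m : nat) (Q : 'I_m -> gT -> R) :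
  (0 < #|X|)%N ->
  (forall x, act 1%g x = x) ->
  (forall g h x, act (g * h)%g x = act g (act h x)) ->
  (forall x y : X, exists g, act g x = y) ->
  (0 < m)%N ->
  (forall i, is_prob (Q i)) ->
  ((fun N : nat => powR (maxdev Q act N) (N%:R^-1)) @ \oo --> omegaX Q act)
  /\ (adversarial_mixing Q act <-> omegaX Q act < 1).
Proof.
move=> X_gt0 act1 actM trans _ Q_prob.
have Q_sum1 i : \sum_g Q i g = 1 by case: (Q_prob i).
have [I [W [W_simple W_sub W0_sum]]] := W0_semisimple R act1 actM.
rewrite (omegaX_eq trans X_gt0 Q_sum1 W_simple W0_sum W_sub).
split; first exact: (nroot_maxdev_cvg trans X_gt0 Q_sum1 W0_sum W_sub).
exact: (mixing_iff trans X_gt0 Q_sum1 W_simple W0_sum W_sub).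
Qed.
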